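(* Let $X\in\mathbb{R}^{n\times r}$ have linearly independent columns and let $A\in\mathbb{R}^{r\times r}$ be skewsymmetric. Then $\det(A+X^\top X)>0$. Moreover, the function on subsets $\mathtt{C}\subseteq\{1,\dots,n\}$ given by $$p(\mathtt{C})=\frac{1}{\det(A+X^\top X)}\det\begin{bmatrix}0_{|\mathtt{C}|}&X_{\mathtt{C}:}\\-(X_{\mathtt{C}:})^\top&A\end{bmatrix}$$ is a probability mass function on the subsets of $\{1,\dots,n\}$. That is, $p(\mathtt{C})\ge0$ for all $\mathtt{C}$ and $\sum_{\mathtt{C}}p(\mathtt{C})=1$. For $\mathtt{C}=\emptyset$ the matrix is understood as $A$.
   Context: $X_{\mathtt{C}:}$ is the submatrix of $X$ with rows indexed by $\mathtt{C}$ in increasing order. $0_m$ is the $m\times m$ zero matrix. *)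

From mathcomp Require Import all_boot all_order all_algebra.
Set Implicit Arguments. Unset Strict Implicit. Unset Printing Implicit Defensive.
Import Order.TTheory GRing.Theory Num.Theory.
Local Open Scope ring_scope.

(* X_{C:} : rows of X indexed by C, in increasing order (enum of a set of
   ordinals lists them increasingly). *)
Definition subrows (R : Type) (n r : nat) (C : {set 'I_n}) (X : 'M[R]_(n, r))
  : 'M[R]_(#|C|, r) :=
  \matrix_(i < #|C|, j < r) X (enum_val i) j.

Definition pblock (R : nzRingType) (n r : nat) (C : {set 'I_n})
  (X : 'M[R]_(n, r)) (A : 'M[R]_r) : 'M[R]_(#|C| + r) :=
  block_mx (0 : 'M[R]_#|C|) (subrows C X) (- (subrows C X)^T) A.

Definition pmf (R : fieldType) (n r : nat) (X : 'M[R]_(n, r)) (A : 'M[R]_r)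
  (C : {set 'I_n}) : R :=
  \det (pblock C X A) / \det (A + X^T *m X).

From Pilot Require Import Defs.
From mathcomp Require Import all_boot all_order all_algebra.
From mathcomp Require Import ring lra.
Set Implicit Arguments. Unset Strict Implicit. Unset Printing Implicit Defensive.
Import Order.TTheory GRing.Theory Num.Theory.
Local Open Scope ring_scope.

(* The denominator is positive because x^T (A + X^T X) x = |X x|^2 > 0 for
   x <> 0 (the skew part contributes nothing), and a matrix whose quadratic
   form is positive definite has positive determinant, by induction through
   the Schur complement of its top-left entry.  Each numerator is the
   determinant of a skew-symmetric matrix M, hence nonnegative: det (M + e I)
   is a polynomial in e that is positive for e > 0.  Finally, split the top
   rows of [I X; -X^T A] as [I 0] + [0 X] and expand the determinant by
   multilinearity: the terms are indexed by the set C of rows taken from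
   [0 X], and deleting the remaining unit rows and their columns leaves
   exactly [0 X_C; -X_C^T A].  So the numerators sum to
   det [I X; -X^T A] = det (A + X^T X). *)

Lemma horner_ge0_right (R : realFieldType) (p : {poly R}) (a : R) :
  (forall x, a < x -> 0 <= p.[x]) -> 0 <= p.[a].
Proof.
move=> p_ge0; rewrite leNgt; apply/negP => pa_lt0.
have [q pE] : exists q, p = q * ('X - a%:P) + p.[a]%:P.
  have /factor_theorem[q pq] : root (p - p.[a]%:P) a.
    by rewrite rootE !hornerE subrr.
  by exists q; rewrite -pq subrK.
have [ub q_le] : {ub : R | forall x, `|x| <= `|a| + 1 -> `|q.[x]| <= ub}
  := poly_disk_bound q (`|a| + 1).
have ub_ge0 : 0 <= ub.
  by apply: le_trans (q_le a _); rewrite ?normr_ge0 ?lerDl.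
have ub1_gt0 : 0 < ub + 1 by lra.
pose d : R := Num.min 1 (- p.[a] / (ub + 1)).
have [d_le1 d_le] : d <= 1 /\ d * (ub + 1) <= - p.[a].
  by rewrite -ler_pdivlMr // /d !ge_min !lexx ?orbT.
have d_gt0 : 0 < d by rewrite lt_min ltr01 divr_gt0 ?oppr_gt0.
have q_le_ub : q.[a + d] <= ub.
  apply: le_trans (ler_norm _) (q_le _ _).
  by rewrite (le_trans (ler_normD _ _)) // lerD2l ger0_norm // ltW.
have := p_ge0 (a + d); rewrite ltrDl pE !hornerE addrAC subrr add0r.
move=> /(_ d_gt0); nra.
Qed.

Lemma horner_char_poly (R : comNzRingType) n (A : 'M[R]_n) a :
  (char_poly A).[a] = \det (a%:M - A).
Proof.
rewrite /char_poly -horner_evalE -det_map_mx; congr (\det _).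
apply/matrixP => i j; rewrite !mxE rmorphB rmorphMn /=.
by rewrite !horner_evalE hornerX hornerC.
Qed.

Definition qform (R : pzRingType) m (N : 'M[R]_m) (x : 'cV[R]_m) : R :=
  (x^T *m N *m x) 0 0.

Lemma qformD (R : pzRingType) m (M N : 'M[R]_m) x :
  qform (M + N) x = qform M x + qform N x.
Proof. by rewrite /qform mulmxDr mulmxDl mxE. Qed.

Lemma qform_tr (R : comPzRingType) m (M : 'M[R]_m) x : qform M^T x = qform M x.
Proof.
have trE : (x^T *m M *m x)^T = x^T *m M^T *m x by rewrite !trmx_mul trmxK mulmxA.
by rewrite /qform -trE mxE.
Qed.

Lemma qform_skew (R : numDomainType) m (M : 'M[R]_m) x :
  M^T = - M -> qform M x = 0.
Proof.
move=> skewM; apply/eqP; have /= <- := mulrn_eq0 (qform M x) 2; rewrite mulr2n.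
by rewrite -{1}qform_tr skewM /qform mulmxN mulNmx mxE addNr.
Qed.

Lemma trmx_mul_gt0 (R : realDomainType) m (x : 'cV[R]_m) :
  x != 0 -> 0 < (x^T *m x) 0 0.
Proof.
move=> x_neq0; have x2_ge0 (i : 'I_m) : 0 <= x^T 0 i * x i 0.
  by rewrite mxE -expr2 sqr_ge0.
rewrite mxE lt_def sumr_ge0 ?andbT //; apply: contra x_neq0.
move=> /eqP/psumr_eq0P x2_eq0; apply/eqP/matrixP => i j.
have /eqP := x2_eq0 (fun i _ => x2_ge0 i) i isT.
by rewrite ord1 !mxE -expr2 sqrf_eq0 => /eqP.
Qed.

Lemma qform_block (R : pzRingType) m1 m2 (a : 'M[R]_m1) b c (D : 'M[R]_m2) u y :
  qform (block_mx a b c D) (col_mx u y) =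
  qform a u + (u^T *m b *m y) 0 0 + (y^T *m c *m u) 0 0 + qform D y.
Proof.
rewrite /qform tr_col_mx mul_row_block mul_row_col !mulmxDl !mxE.
by rewrite addrACA !addrA.
Qed.

Lemma det_block_schur (R : comUnitRingType) m1 m2 (A : 'M[R]_m1) B C
    (D : 'M[R]_m2) :
  A \in unitmx ->
  \det (block_mx A B C D) = \det A * \det (D - C *m invmx A *m B).
Proof.
move=> A_unit.
have -> : block_mx A B C D = block_mx 1%:M 0 (C *m invmx A) 1%:M *m
                             block_mx A B 0 (D - C *m invmx A *m B).
  rewrite mulmx_block !mul1mx !mul0mx !addr0 -mulmxA mulVmx //.
  by rewrite mulmx1 addrC subrK.
by rewrite det_mulmx det_lblock det_ublock !det1 !mul1r.
Qed.

Lemma det_gt0_qform (R : realFieldType) m (N : 'M[R]_m) :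
  (forall x, x != 0 -> 0 < qform N x) -> 0 < \det N.
Proof.
elim: m N => [|m IH] N N_pd; first by rewrite det_mx00.
move: N N_pd; rewrite -[m.+1]/(1 + m)%N => N; rewrite -[N]submxK.
move: (ulsubmx N) (ursubmx N) (dlsubmx N) (drsubmx N) => a b c D N_pd.
have a_gt0 : 0 < a 0 0.
  have := N_pd (col_mx 1%:M 0); rewrite qform_block /qform trmx0 trmx1.
  rewrite !mulmx0 !mul0mx mul1mx mulmx1 !mxE !addr0; apply.
  by rewrite col_mx_eq0 negb_and -[1%:M]/(1 : 'M_1) oner_eq0.
have a_unit : a \in unitmx by rewrite unitmxE det_mx11 unitfE gt_eqF.
rewrite det_block_schur // det_mx11 mulr_gt0 // IH // => y y_neq0.
pose t := - (b *m y) 0 0 / a 0 0.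
have -> : qform (D - c *m invmx a *m b) y =
          qform (block_mx a b c D) (col_mx t%:M y).
  have cbE : y^T *m c *m (b *m y) = ((y^T *m c) 0 0 * (b *m y) 0 0)%:M.
    by rewrite [LHS]mx11_scalar mxE big_ord1.
  rewrite qform_block /qform {1}[a]mx11_scalar invmx_scalar tr_scalar_mx.
  rewrite !mul_mx_scalar !mul_scalar_mx mulmxBr mulmxBl -scalemxAl.
  rewrite -[(_ *: c) *m b]scalemxAl -scalemxAr -scalemxAl.
  rewrite mulmxA -[_ *m b *m y]mulmxA.
  rewrite cbE /t !mxE eqxx mulr1n.
  by field; rewrite gt_eqF.
by apply: N_pd; rewrite col_mx_eq0 negb_and y_neq0 orbT.
Qed.

Lemma det_ge0_qform (R : realFieldType) m (N : 'M[R]_m) :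
  (forall x, 0 <= qform N x) -> 0 <= \det N.
Proof.
move=> N_psd; have := @horner_ge0_right _ (char_poly (- N)) 0.
rewrite horner_char_poly raddf0 sub0r opprK; apply => e e_gt0.
rewrite horner_char_poly opprK ltW // det_gt0_qform // => x x_neq0.
rewrite qformD ltr_wpDr // /qform mul_mx_scalar -scalemxAl mxE.
by rewrite mulr_gt0 ?trmx_mul_gt0.
Qed.

Lemma det_skew_ge0 (R : realFieldType) m (M : 'M[R]_m) :
  M^T = - M -> 0 <= \det M.
Proof. by move=> skewM; apply: det_ge0_qform => x; rewrite qform_skew. Qed.

Lemma det_mxsub_perm (R : comPzRingType) n (M : 'M[R]_n) (f : 'I_n -> 'I_n) :
  injective f -> \det (mxsub f f M) = \det M.
Proof.
move=> f_inj; pose s := perm.perm f_inj.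
have -> : mxsub f f M = row_perm s (col_perm s M).
  by apply/matrixP => i j; rewrite !mxE !perm.permE.
rewrite row_permE col_permE !det_mulmx !det_perm perm.odd_permV.
by rewrite mulrCA -signr_addb addbb mulr1.
Qed.

Lemma det_unit_row (R : comPzRingType) n (M : 'M[R]_n.+1) i0 :
  (forall j, M i0 j = (i0 == j)%:R) -> \det M = \det (row' i0 (col' i0 M)).
Proof.
move=> M_i0; rewrite (expand_det_row M i0) (bigD1 i0) //= big1 => [|j j_neq].
  by rewrite M_i0 eqxx mul1r addr0 /cofactor -signr_odd oddD addbb mul1r.
by rewrite M_i0 eq_sym (negbTE j_neq) mul0r.
Qed.

Lemma det_mxsub_unit_rows (R : comPzRingType) n (M : 'M[R]_n) m
    (f : 'I_m -> 'I_n) :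
  injective f -> (forall i, i \notin codom f -> forall j, M i j = (i == j)%:R) ->
  \det M = \det (mxsub f f M).
Proof.
elim: n M m f => [|n IH] M m f f_inj M_unit.
  case: m f {f_inj M_unit} => [|m] f; first by rewrite !det_mx00.
  by case: (f ord0).
have [i0 i0_notin | f_onto] := pickP (fun i => i \notin codom f); last first.
  have m_eq : m = n.+1.
    rewrite -(card_ord m) -(card_codom f_inj) -[RHS](card_ord n.+1).
    by apply: eq_card => i; have := f_onto i; rewrite inE /= => /negbFE.
  by subst m; rewrite det_mxsub_perm.
have f_neq i : i0 != f i by apply: contraNneq i0_notin => ->; rewrite codom_f.
pose g i := s2val (unlift_some (f_neq i)).
have gK i : lift i0 (g i) = f i by rewrite /g; case: (unlift_some _).
have g_inj : injective g.
  by move=> i j /(congr1 (lift i0)); rewrite !gK => /f_inj.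
rewrite (det_unit_row (M_unit _ i0_notin)) (IH _ _ g g_inj) => [|i i_notin j].
  by congr (\det _); apply/matrixP => i j; rewrite !mxE !gK.
rewrite !mxE M_unit ?(inj_eq (@lift_inj _ i0)) //.
apply: contra i_notin => /codomP[k fk]; apply/codomP; exists k.
by apply: (@lift_inj _ i0); rewrite gK.
Qed.

Definition rowsel (R : Type) m k (C : {set 'I_m}) (U V : 'M[R]_(m, k)) :
  'M[R]_(m, k) := \matrix_(i, j) if i \in C then U i j else V i j.

Lemma det_col_mx_sum_rowsel (R : comPzRingType) n r (U V : 'M[R]_(n, n + r))
    (W : 'M[R]_(r, n + r)) :
  \det (col_mx (U + V) W) = \sum_(C : {set 'I_n}) \det (col_mx (rowsel C U V) W).
Proof.
rewrite /determinant exchange_big /=; apply: eq_bigr => s _.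
rewrite -mulr_sumr; congr (_ * _).
rewrite big_split_ord /=; under eq_bigr do rewrite col_mxEu mxE.
rewrite bigA_distr mulr_suml.
apply: eq_bigr => C _; rewrite big_split_ord /=; congr (_ * _).
  by apply: eq_bigr => i _; rewrite col_mxEu mxE.
by apply: eq_bigr => i _; rewrite !col_mxEd.
Qed.

Definition pblock_pad (R : pzRingType) n r (C : {set 'I_n}) (X : 'M[R]_(n, r))
    (A : 'M[R]_r) : 'M[R]_(n + r) :=
  col_mx (rowsel C (row_mx 0 X) (row_mx 1%:M 0)) (row_mx (- X^T) A).

(* [Defs.pblock] is qualified because finset also exports a [pblock]. *)
Lemma det_pblock_pad (R : comNzRingType) n r (C : {set 'I_n}) (X : 'M[R]_(n, r))
    (A : 'M[R]_r) :
  \det (pblock_pad C X A) = \det (Defs.pblock C X A).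
Proof.
pose f (k : 'I_(#|C| + r)) :=
  match split k with inl a => lshift r (enum_val a) | inr b => rshift n b end.
have fl a : f (lshift r a) = lshift r (enum_val a).
  by rewrite /f -[lshift r a]/(unsplit (inl a)) unsplitK.
have fr b : f (rshift #|C| b) = rshift n b.
  by rewrite /f -[rshift _ b]/(unsplit (inr b)) unsplitK.
have f_inj : injective f.
  move=> i j; case: (split_ordP i) => a ->; case: (split_ordP j) => b ->;
    rewrite ?fl ?fr => /eqP;
    rewrite ?eq_lshift ?eq_rshift ?eq_lrshift ?eq_rlshift // => /eqP.
  - by move/enum_val_inj ->.
  - by move->.
rewrite (det_mxsub_unit_rows (f := f)) //; last first.
  move=> i + j; case: (split_ordP i) => [a -> a_notin | b -> /codomP[]].
    have aC : a \notin C.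
      apply: contra a_notin => aC; apply/codomP.
      by exists (lshift r (enum_rank_in aC a)); rewrite fl enum_rankK_in.
    rewrite col_mxEu mxE (negbTE aC).
    case: (split_ordP j) => b ->;
      by rewrite ?row_mxEl ?row_mxEr !mxE ?eq_lshift ?eq_lrshift.
  by exists (rshift #|C| b); rewrite fr.
congr (\det _); apply/matrixP => i j; rewrite mxE.
case: (split_ordP i) => a ->; case: (split_ordP j) => b ->; rewrite ?fl ?fr.
- by rewrite col_mxEu mxE enum_valP row_mxEl block_mxEul !mxE.
- by rewrite col_mxEu mxE enum_valP row_mxEr block_mxEur !mxE.
- by rewrite col_mxEd row_mxEl block_mxEdl !mxE.
- by rewrite col_mxEd row_mxEr block_mxEdr.
Qed.

Lemma sum_det_pblock (R : comUnitRingType) n r (X : 'M[R]_(n, r)) (A : 'M[R]_r) :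
  \sum_(C : {set 'I_n}) \det (Defs.pblock C X A) = \det (A + X^T *m X).
Proof.
under eq_bigr do rewrite -det_pblock_pad.
rewrite -det_col_mx_sum_rowsel add_row_mx add0r addr0.
rewrite -[col_mx _ _]/(block_mx 1%:M X (- X^T) A) det_block_schur ?unitmx1 //.
by rewrite det1 mul1r invmx1 mulmx1 mulNmx opprK.
Qed.

Lemma pblock_skew (R : nzRingType) n r (C : {set 'I_n}) (X : 'M[R]_(n, r))
    (A : 'M[R]_r) :
  A^T = - A -> (Defs.pblock C X A)^T = - Defs.pblock C X A.
Proof.
move=> skewA; rewrite /Defs.pblock tr_block_mx opp_block_mx trmx0 oppr0 skewA.
by rewrite !linearN /= trmxK opprK.
Qed.

Lemma det_skew_add_gram_gt0 (R : realFieldType) n r (X : 'M[R]_(n, r))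
    (A : 'M[R]_r) :
  row_free X^T -> A^T = - A -> 0 < \det (A + X^T *m X).
Proof.
move=> X_free skewA; apply: det_gt0_qform => x x_neq0.
rewrite qformD qform_skew // add0r /qform mulmxA -trmx_mul -mulmxA.
rewrite trmx_mul_gt0 //.
apply: contra x_neq0 => /eqP Xx_eq0; apply/eqP/trmx_inj/(row_free_inj X_free).
by rewrite -trmx_mul Xx_eq0 !trmx0 mul0mx.
Qed.

Theorem mainTheorem6 (R : realFieldType) (n r : nat)
  (X : 'M[R]_(n, r)) (A : 'M[R]_r)
  (hX : row_free X^T) (hA : A^T = - A) :
  0 < \det (A + X^T *m X) /\
  (forall C : {set 'I_n}, 0 <= pmf X A C) /\
  \sum_(C : {set 'I_n}) pmf X A C = 1.
Proof.
have det_gt0 := det_skew_add_gram_gt0 hX hA.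
split=> //; split=> [C|].
  by apply: divr_ge0 (ltW det_gt0); apply: det_skew_ge0; apply: pblock_skew.
by rewrite /pmf -mulr_suml sum_det_pblock divff // gt_eqF.
Qed.
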